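(* Let $u\in L_{\mathrm{up}}$ and $(\ell_1,\ell_2)\in A_u$. Then (a) $\mathrm{apex}(\ell_1)$ is a strict ancestor of $\mathrm{apex}(\ell_2)$ in $G$, and (b) $P_{u,\ell_1}$ is the edge set of a subpath of the $\mathrm{apex}(\ell_1)$-$\mathrm{apex}(\ell_2)$ path in $G$.
   Context: Let $(G=(V,E),L,w)$ be a WTAP instance (spanning tree $G$, links $L\subseteq\binom V2$, weights $w>0$) with a fixed root $r\in V$, and let $F\subseteq L$ be a WTAP solution, i.e. $\bigcup_{\ell\in F}P_\ell=E$, where $P_\ell$ is the edge set of the tree path between the endpoints of $\ell$ and $V_\ell$ its vertex set. Ancestors of $v$ are the vertices on the $r$-$v$ path in $G$ (including $r$ and $v$); strict ancestors exclude $v$; descendants are defined reciprocally. $\mathrm{apex}(\ell)$ is the vertex of $V_\ell$ closest to $r$. An up-link is a link $\{t,b\}$ with $t$ an ancestor of $b$; $L_{\mathrm{up}}$ is the set of up-links. For $v\in V$ let $B_v=\{\ell\in F\colon\mathrm{apex}(\ell)\text{ is a descendant of }v\}$. For an up-link $u=\{t,b\}$ with $t$ an ancestor of $b$, let $v_u$ be the ancestor of $t$ farthest from $r$ such that $P_u\subseteq\bigcup_{\ell\in B_{v_u}}P_\ell$, and fix $F_u\subseteq B_{v_u}$ inclusion-wise minimal with $P_u\subseteq\bigcup_{\ell\in F_u}P_\ell$. For $\ell\in F_u$ let $P_{u,\ell}=P_u\setminus\bigcup_{\bar\ell\in F_u\setminus\{\ell\}}P_{\bar\ell}$; these sets are nonempty,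 pairwise disjoint, and each is the edge set of a path. Define $\ell_1\prec_u\ell_2$ iff the edges of $P_{u,\ell_1}$ appear before those of $P_{u,\ell_2}$ on the $t$-$b$ path in $G$. If $\ell_1\prec_u\cdots\prec_u\ell_q$ are the links of $F_u$, let $A_u=\{(\ell_i,\ell_{i+1})\colon i=1,\dots,q-1\}$. *)

From mathcomp Require Import all_boot all_order all_algebra.
Set Implicit Arguments. Unset Strict Implicit. Unset Printing Implicit Defensive.

Section WTAP.
Variable V : finType.
(* Tree edges and links are 2-element subsets of V. *)
Variable E : {set {set V}}.

Definition adj : rel V := fun a b => [set a; b] \in E.

Definition edge_seq (q : seq V) : seq {set V} :=
  match q with [::] => [::] | a :: s => pairmap (fun x y => [set x; y]) a s end.

Definition is_tpath (x y : V) (q : seq V) : bool :=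
  match q with
  | [::] => false
  | a :: s => [&& a == x, last a s == y, path adj a s & uniq q]
  end.

Definition is_spanning_tree : Prop :=
  (forall e, e \in E -> #|e| = 2) /\ (forall x y, exists! q, is_tpath x y q).

Definition tdepth (r v : V) (n : nat) : Prop :=
  exists q, is_tpath r v q /\ size q = n.+1.

Definition ancestor (r a v : V) : Prop := exists q, is_tpath r v q /\ a \in q.
Definition strict_ancestor (r a v : V) : Prop := ancestor r a v /\ a <> v.

(* c \in V_l *)
Definition on_link_path (l : {set V}) (c : V) : Prop :=
  exists x y q, l = [set x; y] /\ is_tpath x y q /\ c \in q.
(* e \in P_l *)
Definition link_path (l : {set V}) (e : {set V}) : Prop :=
  exists x y q, l = [set x; y] /\ is_tpath x y q /\ e \in edge_seq q.

(* a = apex(l): the vertex of V_l closest to r *)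
Definition is_apex (r : V) (l : {set V}) (a : V) : Prop :=
  on_link_path l a /\
  forall c, on_link_path l c -> forall n m, tdepth r a n -> tdepth r c m -> n <= m.

Definition is_WTAP_solution (F : {set {set V}}) : Prop :=
  forall e, e \in E <-> exists2 l, l \in F & link_path l e.

Definition inB (r : V) (F : {set {set V}}) (v : V) (l : {set V}) : Prop :=
  l \in F /\ exists a, is_apex r l a /\ ancestor r v a.

Definition covered_by (S : {set V} -> Prop) (u : {set V}) : Prop :=
  forall e, link_path u e -> exists l, S l /\ link_path l e.

(* v = v_u, where t is the upper endpoint of u *)
Definition is_vu (r : V) (F : {set {set V}}) (t : V) (u : {set V}) (v : V) : Prop :=
  [/\ ancestor r v t, covered_by (inB r F v) u &
   forall w, ancestor r w t -> covered_by (inB r F w) u ->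
     forall n m, tdepth r w n -> tdepth r v m -> n <= m].

Definition is_Fu (r : V) (F : {set {set V}}) (u : {set V}) (vu : V)
    (Fu : {set {set V}}) : Prop :=
  [/\ forall l, l \in Fu -> inB r F vu l,
      covered_by (fun l => l \in Fu) u &
      forall F' : {set {set V}}, F' \proper Fu -> ~ covered_by (fun l => l \in F') u].

(* e \in P_{u,l} *)
Definition Pul (u : {set V}) (Fu : {set {set V}}) (l : {set V}) (e : {set V}) : Prop :=
  link_path u e /\ forall l', l' \in Fu -> l' != l -> ~ link_path l' e.

(* l1 <_u l2: the edges of P_{u,l1} appear before those of P_{u,l2} on the
   t-b path *)
Definition prec_u (u : {set V}) (Fu : {set {set V}}) (t b : V) (l1 l2 : {set V}) : Prop :=
  forall q, is_tpath t b q -> forall e1 e2, Pul u Fu l1 e1 -> Pul u Fu l2 e2 ->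
    index e1 (edge_seq q) < index e2 (edge_seq q).

(* (l1, l2) \in A_u: l2 is the immediate successor of l1 in <_u *)
Definition in_Au (u : {set V}) (Fu : {set {set V}}) (t b : V) (l1 l2 : {set V}) : Prop :=
  [/\ l1 \in Fu, l2 \in Fu, prec_u u Fu t b l1 l2 &
      ~ exists2 l, l \in Fu & prec_u u Fu t b l1 l /\ prec_u u Fu t b l l2].

End WTAP.

From Pilot Require Import Defs.
From mathcomp Require Import all_boot all_order all_algebra.
From mathcomp Require Import zify.
From Stdlib Require Import Classical Wf_nat.
Set Implicit Arguments. Unset Strict Implicit. Unset Printing Implicit Defensive.

(* Work on the root path Q of b, on which P_u is the segment from t to b.
   Along a tree path the edges covered by one link form an interval, since
   the tree path between two vertices of V_l stays inside P_l.  By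
   minimality of F_u every P_{u,l} is nonempty, so each P_{u,l} is an
   interval of Q, and P_{u,l1} lies before P_{u,l2}.  The first edge of Q
   covered by l2 comes after P_{u,l1}; its lower end lies in V_{l2} while
   its parent does not, so it is apex(l2).  The apex of l1 is an ancestor of
   every vertex of V_{l1}, in particular of the top of P_{u,l1}.  Hence
   apex(l1), P_{u,l1} and apex(l2) occur on Q in this order. *)

Lemma classic_ex_minn (P : nat -> Prop) :
  (exists n, P n) -> exists2 m, P m & forall k, P k -> m <= k.
Proof.
move=> exP.
have [m [[Pm min_m] _]] :=
  dec_inh_nat_subset_has_unique_least_element P (fun n => classic (P n)) exP.
by exists m => // k /min_m/leP.
Qed.

Lemma classic_ex_maxn (P : nat -> Prop) N :
  (exists n, P n) -> (forall n, P n -> n <= N) ->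
  exists2 m, P m & forall k, P k -> k <= m.
Proof.
move=> [n Pn] le_N.
have [|m Pm min_m] := @classic_ex_minn (fun k => P (N - k)).
  by exists (N - n); rewrite subKn // le_N.
exists (N - m) => // k Pk; have kN := le_N k Pk.
have := min_m (N - k); rewrite subKn // => /(_ Pk); lia.
Qed.

Lemma infix_drop_take (T : eqType) (s : seq T) i j i' j' :
  i <= i' -> j' <= j -> infix (drop i' (take j' s)) (drop i (take j s)).
Proof.
move=> le_i le_j.
have -> : drop i' (take j' s) = drop (i' - i) (take (j' - i) (drop i (take j s))).
  rewrite take_drop drop_drop subnK //.
  have [le_ij|lt_ji] := leqP i j'; first by rewrite subnK // take_takel.
  by rewrite !drop_oversize // size_take_min; lia.
exact: infix_trans (infix_drop _ _) (infix_take _ _).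
Qed.

Section Tree.
Variables (V : finType) (E : {set {set V}}).
Hypothesis tree : is_spanning_tree E.

Local Notation adj := (adj E).
Local Notation tpath := (is_tpath E).
Implicit Types (x y z a c : V) (q : seq V) (l : {set V}).

Lemma adjC : symmetric adj.
Proof. by move=> x y; rewrite /Defs.adj setUC. Qed.

Lemma adj_neq x y : adj x y -> x != y.
Proof.
by move=> /(proj1 tree); apply: contra_eqN => /eqP->; rewrite setUid cards1.
Qed.

Lemma is_tpathE x0 x y q : tpath x y q <->
  [/\ 0 < size q, nth x0 q 0 = x, nth x0 q (size q).-1 = y, sorted adj q & uniq q].
Proof.
case: q => [|a s] /=; first by split=> // -[].
rewrite -(last_nth x0); split; first by case/and4P => /eqP-> /eqP-> -> ->.
by case=> _ -> -> -> ->; rewrite !eqxx.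
Qed.

Lemma tpath_exists x y : exists q, tpath x y q.
Proof. by have [_ /(_ x y) [q [tq _]]] := tree; exists q. Qed.

Lemma tpath_uniq x y q q' : tpath x y q -> tpath x y q' -> q = q'.
Proof.
by have [_ /(_ x y) [q0 [_ eq0]]] := tree => /eq0 <- /eq0 <-.
Qed.

Lemma tpath_adj x y : adj x y -> tpath x y [:: x; y].
Proof. by move=> xy; rewrite /= !eqxx xy inE andbT adj_neq. Qed.

Lemma tpath_rev x y q : tpath x y q -> tpath y x (rev q).
Proof.
move=> /(is_tpathE x) [q_gt0 q0 qn sq uq]; apply/(is_tpathE x).
rewrite size_rev rev_uniq nth_rev // subn1 nth_rev ?prednK // subnn.
split=> //; rewrite rev_sorted; apply: sub_sorted sq => a c; by rewrite adjC.
Qed.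

Lemma tpath_sub x0 x y q i j : tpath x y q -> i <= j < size q ->
  tpath (nth x0 q i) (nth x0 q j) (drop i (take j.+1 q)).
Proof.
move=> /(is_tpathE x0) [_ _ _ sq uq] /andP[le_ij lt_j].
have sz : size (drop i (take j.+1 q)) = j.+1 - i.
  by rewrite size_drop size_take_min; lia.
apply/(is_tpathE x0); rewrite sz nth_drop nth_take ?addn0; last lia.
rewrite nth_drop nth_take; last lia.
split; [lia | by [] | by congr nth; lia | |].
- exact: infix_sorted (infix_trans (infix_drop _ _) (infix_take _ _)) sq.
- exact/drop_uniq/take_uniq.
Qed.

Lemma edge_seqP x0 q e : reflect
  (exists2 m, m.+1 < size q & e = [set nth x0 q m; nth x0 q m.+1]) (e \in edge_seq q).
Proof.
case: q => [|a s] /=; first by apply: (iffP idP) => // -[].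
apply: (iffP (nthP set0)); rewrite size_pairmap.
- by case=> m lt_m <-; exists m; rewrite ?(nth_pairmap x0).
- by case=> m lt_m ->; exists m; rewrite ?(nth_pairmap x0).
Qed.

Lemma nth_edge_seq x0 q m : m.+1 < size q ->
  nth set0 (edge_seq q) m = [set nth x0 q m; nth x0 q m.+1].
Proof. by case: q => [|a s] //= lt_m; rewrite (nth_pairmap x0). Qed.

Lemma size_edge_seq q : size (edge_seq q) = (size q).-1.
Proof. by case: q => [|a s] //=; rewrite size_pairmap. Qed.

Lemma edge_seq_subP x0 q i j e : j < size q -> reflect
    (exists2 m, i <= m < j & e = [set nth x0 q m; nth x0 q m.+1])
    (e \in edge_seq (drop i (take j.+1 q))).
Proof.
move=> lt_j; have sz : size (drop i (take j.+1 q)) = j.+1 - i.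
  by rewrite size_drop size_take_min; lia.
apply: (iffP (edge_seqP x0 _ _)); rewrite sz.
- case=> m lt_m ->; exists (i + m); first lia.
  by rewrite !nth_drop !nth_take ?addnS //; lia.
- case=> m /andP[le_im lt_mj] ->; exists (m - i); first lia.
  by rewrite !nth_drop !nth_take ?addnS ?subnKC //; lia.
Qed.

Lemma set2_inj (x y x' y' : V) : [set x; y] = [set x'; y'] ->
  (x = x' /\ y = y') \/ (x = y' /\ y = x').
Proof.
move=> e; have /set2P x_in : x \in [set x'; y'] by rewrite -e set21.
have /set2P y_in : y \in [set x'; y'] by rewrite -e set22.
have /set2P x'_in : x' \in [set x; y] by rewrite e set21.
have /set2P y'_in : y' \in [set x; y] by rewrite e set22.
by case: x_in y_in x'_in y'_in => [] ? [] ? [] ? [] ?; subst; intuition congruence.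
Qed.

Lemma edge_seq_mem q x y : [set x; y] \in edge_seq q -> x \in q /\ y \in q.
Proof.
case: q => [|x0 s] //; case/(edge_seqP x0) => m lt_m /set2_inj.
by case=> -[-> ->]; split; apply: mem_nth => //; apply: ltnW.
Qed.

Lemma edge_seq_uniq q : uniq q -> uniq (edge_seq q).
Proof.
elim: q => [|a [|c s] IH] //= /andP[a_notin uq]; rewrite IH // andbT.
by apply: contra a_notin => /(@edge_seq_mem (c :: s)) [].
Qed.

Lemma edge_seq_rev q : edge_seq (rev q) =i edge_seq q.
Proof.
suff sub (p : seq V) : {subset edge_seq p <= edge_seq (rev p)}.
  by move=> e; apply/idP/idP => /sub //; rewrite revK.
case: p => [|x0 s] // e /(edge_seqP x0) [m lt_m ->]; set p := x0 :: s in lt_m *.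
apply/(edge_seqP x0); exists (size p - m.+2); first by rewrite size_rev; lia.
rewrite !nth_rev; try lia.
by rewrite setUC; congr [set nth x0 p _; nth x0 p _]; lia.
Qed.

Lemma tpath_edge_subset x y q a c p : tpath x y q -> a \in q -> c \in q ->
  tpath a c p -> {subset edge_seq p <= edge_seq q}.
Proof.
move=> tq; wlog le_ac : a c p / index a q <= index c q.
  move=> W aq cq tp; have [le|/ltnW le] := leqP (index a q) (index c q).
    exact: W tp.
  by move=> e; rewrite -edge_seq_rev; apply: W le cq aq (tpath_rev tp) e.
move=> aq cq tp e; have lt_c : index c q < size q by rewrite index_mem.
have ac_in : index a q <= index c q < size q by rewrite le_ac lt_c.
have := tpath_sub a tq ac_in; rewrite !nth_index //.
move/(tpath_uniq tp)->; case/(edge_seq_subP a _ _ lt_c) => m lt_m ->.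
by apply/(edge_seqP a); exists m => //; lia.
Qed.

Lemma link_pathE x y q e :
  tpath x y q -> link_path E [set x; y] e <-> e \in edge_seq q.
Proof.
move=> tq; split=> [|qe]; last by exists x, y, q.
case=> x' [y' [q' [/set2_inj [[<- <-] | [<- <-]] [tq' e_in]]]].
  by rewrite (tpath_uniq tq tq').
by rewrite (tpath_uniq tq (tpath_rev tq')) edge_seq_rev.
Qed.

Lemma on_link_pathE x y q c :
  tpath x y q -> on_link_path E [set x; y] c <-> c \in q.
Proof.
move=> tq; split=> [|qc]; last by exists x, y, q.
case=> x' [y' [q' [/set2_inj [[<- <-] | [<- <-]] [tq' c_in]]]].
  by rewrite (tpath_uniq tq tq').
by rewrite (tpath_uniq tq (tpath_rev tq')) mem_rev.
Qed.

Lemma link_tpath l : #|l| = 2 -> exists x y q, l = [set x; y] /\ tpath x y q.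
Proof.
move=> /eqP/cards2P [x [y [_ ->]]].
by have [q tq] := tpath_exists x y; exists x, y, q.
Qed.

Lemma link_path_on l x y : link_path E l [set x; y] ->
  on_link_path E l x /\ on_link_path E l y.
Proof.
case=> [a [c [q [l_ac [tq /edge_seq_mem [x_q y_q]]]]]].
by split; exists a, c, q.
Qed.

Lemma link_path_between l x0 x y q i j k : #|l| = 2 -> tpath x y q ->
  i <= k < j -> j < size q ->
  on_link_path E l (nth x0 q i) -> on_link_path E l (nth x0 q j) ->
  link_path E l [set nth x0 q k; nth x0 q k.+1].
Proof.
move=> /link_tpath [a [c [p [-> tp]]]] tq lt_ikj lt_j.
rewrite (link_pathE _ tp) !(on_link_pathE _ tp) => qi_p qj_p.
have le_ij : i <= j < size q by lia.
apply: tpath_edge_subset tp qi_p qj_p (tpath_sub x0 tq le_ij) _ _.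
by apply/(edge_seq_subP x0 _ _ lt_j); exists k.
Qed.

Lemma link_path_convex l x0 x y q i j k : #|l| = 2 -> tpath x y q ->
  i <= j <= k -> k.+1 < size q ->
  link_path E l [set nth x0 q i; nth x0 q i.+1] ->
  link_path E l [set nth x0 q k; nth x0 q k.+1] ->
  link_path E l [set nth x0 q j; nth x0 q j.+1].
Proof.
move=> card_l tq le_ijk lt_k /link_path_on [qi_l _] /link_path_on [_ qk_l].
by apply: link_path_between card_l tq _ lt_k qi_l qk_l; lia.
Qed.

Section Rooted.
Variable r : V.

Definition root_path v : seq V := xchoose (tpath_exists r v).

Definition parent_of z c : bool := root_path c == rcons (root_path z) c.

Lemma root_pathP v : tpath r v (root_path v).
Proof. exact: xchooseP. Qed.

Lemma tpath_rootE v q : tpath r v q -> q = root_path v.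
Proof. by move/tpath_uniq; apply; apply: root_pathP. Qed.

Lemma ancestorE a v : ancestor E r a v <-> a \in root_path v.
Proof.
split=> [[q [/tpath_rootE -> //]]|av].
by exists (root_path v); split=> //; apply: root_pathP.
Qed.

Lemma size_root_path_gt0 v : 0 < size (root_path v).
Proof. by have /(is_tpathE r) [] := root_pathP v. Qed.

Lemma uniq_root_path v : uniq (root_path v).
Proof. by have /(is_tpathE r) [] := root_pathP v. Qed.

Lemma last_root_path v : nth r (root_path v) (size (root_path v)).-1 = v.
Proof. by have /(is_tpathE r) [] := root_pathP v. Qed.

Lemma mem_root_path v : v \in root_path v.
Proof.
by rewrite -{1}(last_root_path v) mem_nth // prednK // size_root_path_gt0.
Qed.

Lemma root_path_inj : injective root_path.
Proof. by move=> v w e; rewrite -(last_root_path v) -(last_root_path w) e. Qed.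

Lemma root_path_nth v i : i < size (root_path v) ->
  root_path (nth r (root_path v) i) = take i.+1 (root_path v).
Proof.
move=> lt_i; have /(is_tpathE r) [_ v0 _ _ _] := root_pathP v.
have i_in : 0 <= i < size (root_path v) by [].
have := tpath_sub r (root_pathP v) i_in.
by rewrite drop0 v0 => /tpath_rootE.
Qed.

Lemma root_path_ancestor c v : c \in root_path v ->
  root_path c = take (index c (root_path v)).+1 (root_path v).
Proof. by move=> cv; rewrite -root_path_nth ?index_mem // nth_index. Qed.

Lemma ancestor_depth_eq c v : c \in root_path v ->
  size (root_path v) <= size (root_path c) -> c = v.
Proof.
move=> cv; rewrite (root_path_ancestor cv) size_take_min => le_v.
by apply: root_path_inj; rewrite (root_path_ancestor cv) take_oversize //; lia.
Qed.

Lemma adj_parent z z' : adj z z' -> parent_of z z' \/ parent_of z' z.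
Proof.
move=> zz'; rewrite /parent_of.
have [z'_in|z'_notin] := boolP (z' \in root_path z); [right|left]; apply/eqP.
  set i := index z' (root_path z).
  have lt_i : i < size (root_path z) by rewrite index_mem.
  have le_i : i <= (size (root_path z)).-1 < size (root_path z).
    by rewrite prednK ?size_root_path_gt0 //; lia.
  have := tpath_sub r (root_pathP z) le_i.
  rewrite nth_index // last_root_path prednK ?size_root_path_gt0 // take_size.
  rewrite adjC in zz'; move/(tpath_uniq (tpath_adj zz'))/esym => drop_i.
  rewrite (root_path_ancestor z'_in) (take_nth r lt_i) nth_index //.
  by rewrite -!cats1 -catA /= -drop_i cat_take_drop.
apply/esym/tpath_rootE; move: z'_notin; have := root_pathP z.
case: (root_path z) => [|a s] //= /and5P[/eqP-> /eqP last_z path_s r_s uniq_s].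
rewrite inE negb_or; case/andP=> z'_r z'_s.
rewrite last_rcons rcons_path path_s last_z zz' rcons_uniq z'_s uniq_s.
by rewrite mem_rcons inE negb_or eq_sym z'_r r_s !eqxx.
Qed.

(* Along a walk, c can only stop being an ancestor where the walk steps
   from c to its parent. *)
Lemma path_ancestor c z0 zs : path adj z0 zs -> c \in root_path z0 ->
  {in zs, forall z, ~~ parent_of z c} -> {in z0 :: zs, forall z, c \in root_path z}.
Proof.
elim: zs z0 => [|z1 zs IH] z0 /=; first by move=> _ c_z0 _ z; rewrite inE => /eqP->.
case/andP=> z0z1 path_zs c_z0 no_parent.
have c_z1 : c \in root_path z1.
  case: (adj_parent z0z1) => /eqP par; first by rewrite par mem_rcons inE c_z0 orbT.
  move: c_z0; rewrite par mem_rcons inE => /predU1P[c_z0|//].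
  by have := no_parent z1; rewrite inE eqxx /parent_of c_z0 par eqxx => /(_ isT).
move=> z; rewrite inE => /predU1P[->//|z_in]; apply: (IH z1) => // z' z'_in.
by apply: no_parent; rewrite inE z'_in orbT.
Qed.

Lemma tpath_top_ancestor x y q c : tpath x y q -> c \in q ->
  {in q, forall z, ~~ parent_of z c} -> {in q, forall z, c \in root_path z}.
Proof.
move=> tq c_q; case/splitPr: c_q tq => q1 q2 /(is_tpathE x) [_ _ _ sorted_q _].
have sorted_q1 : sorted adj (c :: rev q1).
  have sorted_q1c : sorted adj (rcons q1 c).
    by apply: infix_sorted sorted_q; rewrite -cat_rcons prefix_infix.
  rewrite -rev_rcons rev_sorted; apply: sub_sorted sorted_q1c => a b.
  by rewrite adjC.
have sorted_q2 : sorted adj (c :: q2).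
  by apply: infix_sorted sorted_q; apply: suffix_infix.
move=> no_parent z; rewrite mem_cat inE => /or3P[z_q1|/eqP->|z_q2].
- apply: (path_ancestor sorted_q1 (mem_root_path c)).
    by move=> z' z'_q1; apply: no_parent; rewrite mem_cat -mem_rev z'_q1.
  by rewrite inE mem_rev z_q1 orbT.
- exact: mem_root_path.
- apply: (path_ancestor sorted_q2 (mem_root_path c)).
    by move=> z' z'_q2; apply: no_parent; rewrite mem_cat inE z'_q2 !orbT.
  by rewrite inE z_q2 orbT.
Qed.

Lemma tdepth_root_path v : tdepth E r v (size (root_path v)).-1.
Proof.
exists (root_path v); rewrite prednK ?size_root_path_gt0 //.
by split=> //; apply: root_pathP.
Qed.

Lemma apex_minimal l a x y q : is_apex E r l a -> l = [set x; y] -> tpath x y q ->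
  a \in q /\ {in q, forall c, size (root_path a) <= size (root_path c)}.
Proof.
move=> [a_on a_min] l_xy tq; subst l; split; first exact/(on_link_pathE _ tq).
move=> c c_q; have := a_min c (proj2 (on_link_pathE _ tq) c_q) _ _
  (tdepth_root_path a) (tdepth_root_path c).
by rewrite -!subn1 leq_sub2rE // size_root_path_gt0.
Qed.

Lemma apex_ancestor l a v : #|l| = 2 -> is_apex E r l a ->
  on_link_path E l v -> a \in root_path v.
Proof.
move=> /link_tpath [x [y [q [-> tq]]]] apex_a; rewrite (on_link_pathE _ tq).
have [a_q a_min] := apex_minimal apex_a erefl tq.
apply: (tpath_top_ancestor tq a_q) => z z_q; apply/negP => /eqP par.
by have := a_min z z_q; rewrite par size_rcons ltnn.
Qed.

Lemma apex_eq_top l a w w' : #|l| = 2 -> is_apex E r l a ->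
  on_link_path E l w -> parent_of w' w -> ~ on_link_path E l w' -> a = w.
Proof.
move=> /link_tpath [x [y [q [-> tq]]]] apex_a.
rewrite !(on_link_pathE _ tq) => w_q /eqP par /negP w'_q.
have [a_q a_min] := apex_minimal apex_a erefl tq.
apply/esym/ancestor_depth_eq; last exact: a_min.
apply: (tpath_top_ancestor tq w_q) a_q => z z_q; apply: contra w'_q => /eqP.
by rewrite par => /rcons_inj [/root_path_inj ->].
Qed.

Lemma parent_of_nth v k : k.+1 < size (root_path v) ->
  parent_of (nth r (root_path v) k) (nth r (root_path v) k.+1).
Proof.
move=> lt_k; rewrite /parent_of !root_path_nth ?(take_nth r) //; lia.
Qed.

Section Cover.
Variables (u : {set V}) (t b : V) (Fu : {set {set V}}).
Hypotheses (u_tb : u = [set t; b]) (t_b : t \in root_path b).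
Hypothesis Fu_links : forall l, l \in Fu -> #|l| = 2.
Hypothesis Fu_cover : covered_by E (fun l => l \in Fu) u.
Hypothesis Fu_min :
  forall F' : {set {set V}}, F' \proper Fu -> ~ covered_by E (fun l => l \in F') u.

Local Notation Q := (root_path b).
Local Notation d := (index t Q).
Local Notation n := (size Q).-1.
Local Notation qedge m := [set nth r Q m; nth r Q m.+1].
Local Notation Pul := (Pul E u Fu).

Lemma n_lt_size : n < size Q.
Proof. by rewrite prednK ?size_root_path_gt0. Qed.

Lemma d_le_n : d <= n < size Q.
Proof. by rewrite n_lt_size andbT -ltnS prednK ?size_root_path_gt0 // index_mem. Qed.

Lemma tpath_tb : tpath t b (drop d (take n.+1 Q)).
Proof.
by have := tpath_sub r (root_pathP b) d_le_n; rewrite nth_index // last_root_path.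
Qed.

Lemma link_path_uP e : link_path E u e <-> exists2 m, d <= m < n & e = qedge m.
Proof.
rewrite u_tb (link_pathE _ tpath_tb).
exact: iff_sym (rwP (edge_seq_subP r _ _ n_lt_size)).
Qed.

Lemma index_qedge m : d <= m < n ->
  index (qedge m) (edge_seq (drop d (take n.+1 Q))) = m - d.
Proof.
move=> m_in; have sz : size (drop d (take n.+1 Q)) = n.+1 - d.
  by rewrite size_drop size_take_min; lia.
have <- : nth set0 (edge_seq (drop d (take n.+1 Q))) (m - d) = qedge m.
  by rewrite (nth_edge_seq r) ?sz ?nth_drop ?nth_take ?addnS ?subnKC //; lia.
apply: index_uniq; first by rewrite size_edge_seq sz; lia.
exact/edge_seq_uniq/drop_uniq/take_uniq/uniq_root_path.
Qed.

Lemma Pul_link_path l e : Pul l e -> link_path E l e.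
Proof.
case=> /Fu_cover [l' [l'_Fu l'_e]] only_l.
by case: (eqVneq l' l) => [<- // | ne]; case: (only_l l' l'_Fu ne).
Qed.

Lemma Pul_exists l : l \in Fu -> exists2 m, d <= m < n & Pul l (qedge m).
Proof.
move=> l_Fu; apply: NNPP => none; apply: (Fu_min (properD1 l_Fu)) => e u_e.
apply: NNPP => uncovered; have [m m_in e_m] := (link_path_uP e).1 u_e; subst e.
apply: none; exists m => //; split=> // l' l'_Fu ne l'_m; apply: uncovered.
by exists l'; rewrite in_setD1 ne l'_Fu.
Qed.

Lemma Fu_convex l i j k : l \in Fu -> i <= j <= k -> k < n ->
  link_path E l (qedge i) -> link_path E l (qedge k) -> link_path E l (qedge j).
Proof.
move=> l_Fu le_ijk lt_k.
apply: link_path_convex (Fu_links l_Fu) (root_pathP b) le_ijk _.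
by move: lt_k; rewrite -ltnS prednK ?size_root_path_gt0.
Qed.

Lemma Pul_convex l i j k : l \in Fu -> i <= j <= k -> d <= i -> k < n ->
  Pul l (qedge i) -> Pul l (qedge k) -> Pul l (qedge j).
Proof.
move=> l_Fu le_ijk le_di lt_k Pi Pk.
split=> [|l' l'_Fu ne l'_j]; first by apply/link_path_uP; exists j => //; lia.
have [m m_in Pm] := Pul_exists l'_Fu.
have l'_m := Pul_link_path Pm.
case: (Pi) (Pk) (Pm) => _ only_i [_ only_k] [_ only_m].
have [le_mi|lt_im] := leqP m i.
  by case: (only_i _ l'_Fu ne); apply: (Fu_convex l'_Fu _ _ l'_m l'_j); lia.
have [le_km|lt_mk] := leqP k m.
  by case: (only_k _ l'_Fu ne); apply: (Fu_convex l'_Fu _ _ l'_j l'_m); lia.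
case: (only_m _ l_Fu); first by rewrite eq_sym.
by apply: (Fu_convex l_Fu _ _ (Pul_link_path Pi) (Pul_link_path Pk)); lia.
Qed.

Lemma prec_u_lt l1 l2 m1 m2 : prec_u E u Fu t b l1 l2 ->
  d <= m1 < n -> d <= m2 < n -> Pul l1 (qedge m1) -> Pul l2 (qedge m2) -> m1 < m2.
Proof.
move=> prec m1_in m2_in P1 P2; have := prec _ tpath_tb _ _ P1 P2.
by rewrite !index_qedge //; lia.
Qed.

Lemma Pul_interval l : l \in Fu -> exists al be, [/\ d <= al, al <= be, be < n &
  forall e, Pul l e <-> exists2 m, al <= m <= be & e = qedge m].
Proof.
move=> l_Fu; pose P m := d <= m < n /\ Pul l (qedge m).
have exP : exists m, P m by have [m] := Pul_exists l_Fu; exists m.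
have P_le_n m : P m -> m <= n by case=> /andP[_ /ltnW].
have [al [al_in Pal] al_min] := classic_ex_minn exP.
have [be [be_in Pbe] be_max] := classic_ex_maxn exP P_le_n.
exists al, be; split; [by case/andP: al_in | exact: be_max | by case/andP: be_in |].
move=> e; split=> [Pe | [m m_in ->]].
  have [m m_in e_m] := (link_path_uP e).1 Pe.1; subst e.
  by exists m => //; rewrite al_min ?be_max.
by apply: Pul_convex l_Fu m_in _ _ Pal Pbe; lia.
Qed.

Lemma prec_u_neq l1 l2 : l1 \in Fu -> prec_u E u Fu t b l1 l2 -> l1 != l2.
Proof.
move=> l1_Fu prec; apply/eqP => eq_l; subst l2.
have [m m_in Pm] := Pul_exists l1_Fu.
by have := prec_u_lt prec m_in m_in Pm Pm; rewrite ltnn.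
Qed.

Lemma first_edge_after l1 l2 be : l1 \in Fu -> l2 \in Fu ->
  prec_u E u Fu t b l1 l2 -> d <= be < n -> Pul l1 (qedge be) ->
  exists k, [/\ be <= k, k.+1 < n, link_path E l2 (qedge k.+1) &
                ~ link_path E l2 (qedge k)].
Proof.
move=> l1_Fu l2_Fu prec be_in Pbe.
have [g g_in Pg] := Pul_exists l2_Fu.
have lt_bg := prec_u_lt prec be_in g_in Pbe Pg.
pose P m := d <= m < n /\ link_path E l2 (qedge m).
have [|lo [lo_in l2_lo] lo_min] := @classic_ex_minn P.
  by exists g; split=> //; apply: Pul_link_path Pg.
have lt_blo : be < lo.
  rewrite ltnNge; apply/negP => le_lo; case: Pbe => _ only_be.
  case: (only_be l2 l2_Fu); first by rewrite eq_sym prec_u_neq.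
  by apply: (Fu_convex l2_Fu _ _ l2_lo (Pul_link_path Pg)); lia.
have [k lo_k] : exists k, lo = k.+1 by exists lo.-1; lia.
subst lo; exists k; split=> [||//|l2_k]; try lia.
have : k.+1 <= k by apply: lo_min; split=> //; lia.
by rewrite ltnn.
Qed.

Lemma prec_u_apex l1 l2 a1 a2 : l1 \in Fu -> l2 \in Fu ->
  prec_u E u Fu t b l1 l2 -> is_apex E r l1 a1 -> is_apex E r l2 a2 ->
  strict_ancestor E r a1 a2 /\
  exists q s, [/\ tpath a1 a2 q, infix s q & forall e, e \in edge_seq s <-> Pul l1 e].
Proof.
move=> l1_Fu l2_Fu prec apex1 apex2.
have [al [be [d_al al_be lt_be Pul1]]] := Pul_interval l1_Fu.
have [Pal Pbe] : Pul l1 (qedge al) /\ Pul l1 (qedge be).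
  by split; apply/Pul1; [exists al | exists be] => //; rewrite ?leqnn ?al_be.
have be_in : d <= be < n by lia.
have [k [be_k lt_k l2_k1 l2_k]] := first_edge_after l1_Fu l2_Fu prec be_in Pbe.
have lt_k1 : k.+1 < size Q by move: n_lt_size; lia.
have a2E : a2 = nth r Q k.+1.
  have l2_qk1 := (link_path_on l2_k1).1.
  apply: (apex_eq_top (Fu_links l2_Fu) apex2 l2_qk1 (parent_of_nth lt_k1)) => l2_qk.
  apply/l2_k/(link_path_between (Fu_links l2_Fu) (root_pathP b) _ lt_k1 l2_qk l2_qk1).
  by rewrite leqnn /=.
have a1_al : a1 \in take al.+1 Q.
  rewrite -root_path_nth; last by move: n_lt_size; lia.
  exact: apex_ancestor (Fu_links l1_Fu) apex1 (link_path_on (Pul_link_path Pal)).1.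
have d1_al := index_ltn a1_al.
have a1E : nth r Q (index a1 Q) = a1 by rewrite nth_index // (mem_take a1_al).
have anc12 : strict_ancestor E r a1 a2.
  split=> [|a12].
    by apply/ancestorE; rewrite a2E root_path_nth // in_take ?(mem_take a1_al) //; lia.
  by move: d1_al; rewrite a12 a2E index_uniq ?uniq_root_path //; lia.
split=> //; exists (drop (index a1 Q) (take k.+2 Q)), (drop al (take be.+2 Q)); split.
- have := tpath_sub r (root_pathP b) (_ : index a1 Q <= k.+1 < size Q).
  by rewrite a1E -a2E; apply; lia.
- by apply: infix_drop_take; lia.
have lt_be1 : be.+1 < size Q by move: n_lt_size; lia.
by move=> e; rewrite Pul1; apply: iff_sym (rwP (edge_seq_subP r _ _ lt_be1)).
Qed.

End Cover.
End Rooted.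
End Tree.

Theorem lemma8 (V : finType) (E L : {set {set V}}) (R : realFieldType)
  (w : {set V} -> R) (r : V) (F : {set {set V}})
  (u : {set V}) (t b vu : V) (Fu : {set {set V}})
  (l1 l2 : {set V}) (a1 a2 : V) :
  is_spanning_tree E ->
  (forall l, l \in L -> #|l| = 2) ->
  (forall l, l \in L -> (0 < w l)%R) ->
  F \subset L -> is_WTAP_solution E F ->
  u \in L -> u = [set t; b] -> ancestor E r t b ->
  is_vu E r F t u vu ->
  is_Fu E r F u vu Fu ->
  in_Au E u Fu t b l1 l2 ->
  is_apex E r l1 a1 -> is_apex E r l2 a2 ->
  strict_ancestor E r a1 a2 /\
  exists q s, [/\ is_tpath E a1 a2 q, infix s q &
                  forall e, e \in edge_seq s <-> Pul E u Fu l1 e].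
Proof.
move=> tree L_links _ F_L _ _ u_tb /(ancestorE tree) t_b _ [Fu_B Fu_cover Fu_min].
case=> l1_Fu l2_Fu prec _ apex1 apex2.
have Fu_links l : l \in Fu -> #|l| = 2.
  by case/Fu_B => l_F _; apply/L_links/(subsetP F_L).

exact: (prec_u_apex u_tb t_b Fu_links Fu_cover Fu_min l1_Fu l2_Fu prec apex1 apex2).

Qed.
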